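(* Let $n\geq1$, $N=n+1$, and let $x\in CF(N)$ satisfy $\pi(x)\in\mathrm{Ker}(\partial_n)$. Then $x$ can be written uniquely as $$x=\big[(1,1,u)+(-1,-1,u)+(-1,1,v)+(1,-1,v)+(1,1,w)+(-1,1,w)\big]+(1,1,t)$$ with $u,v,w\in CF(n)$ and $t\in\mathrm{Ker}(\partial_n)$. Moreover, $\partial_N(x)=0$ if and only if $$\partial_nv=w+t+\eta_n w,\qquad \partial_nu=w+\eta_n t+\eta_n w,\qquad \partial_nw=0.$$
   Context: For $m\geq1$, $CF(m)$ is the $\mathbb{Z}_2$-vector space with basis the tuples $(\epsilon_1,\dots,\epsilon_{2m-1})\in\{\pm1\}^{2m-1}$. Linear maps $\eta_m,\tilde\partial_m:CF(m)\to CF(m)$ are given on basis elements by $\eta_m(\epsilon_1,\dots,\epsilon_{2m-1})=(-\epsilon_1,\dots,-\epsilon_{2m-1})$ and $\tilde\partial_m(\epsilon_1,\dots,\epsilon_{2m-1})=\sum_{i=1}^{2m-1}(\epsilon_1,\dots,-\epsilon_i,\dots,\epsilon_{2m-1})$, and $\partial_m=\tilde\partial_m+\eta_m$. $\pi:CF(N)\to CF(n)$ removes the first two coordinates of a basis tuple, extended linearly. For $a,b\in\{\pm1\}$ and $y\in CF(n)$, $(a,b,y)\in CF(N)$ denotes the element obtained by prefixing $(a,b)$ to every basis tuple in $y$, extended linearly (e.g. $(a,b,y_1+y_2)=(a,b,y_1)+(a,b,y_2)$). *)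

From HB Require Import structures.
From mathcomp Require Import all_boot all_order all_algebra.
Set Implicit Arguments. Unset Strict Implicit. Unset Printing Implicit Defensive.
Import GRing.Theory.
Local Open Scope ring_scope.

(* Length of the basis tuples of CF(m): for m >= 1 this is 2m-1.
   (Written as (m-1)*2+1 so that len (k.+2) is convertible to (len k.+1).+2.) *)
Definition len (m : nat) : nat := (m.-1).*2.+1.

(* Signs: true encodes +1, false encodes -1. *)
Definition basis (m : nat) := (len m).-tuple bool.

(* CF(m) (F_2^o = F_2 viewed as a module over itself): the F_2-vector space with basis {+-1}^(2m-1), i.e. F_2-valued
   (coefficient) functions on the basis. *)
Notation CF m := {ffun basis m -> ('F_2)^o}.

Definition bvec (m : nat) (e : basis m) : CF m := [ffun e' => ((e' == e) : nat)%:R].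

Definition linext (m m' : nat) (f : basis m -> CF m') (y : CF m) : CF m' :=
  \sum_(e : basis m) y e *: f e.

Definition negt (m : nat) (e : basis m) : basis m := [tuple ~~ tnth e j | j < len m].
Definition flipt (m : nat) (i : 'I_(len m)) (e : basis m) : basis m :=
  [tuple (if j == i then ~~ tnth e j else tnth e j) | j < len m].

Definition eta (m : nat) : CF m -> CF m := linext (fun e => bvec (negt e)).
Definition dtil (m : nat) : CF m -> CF m :=
  linext (fun e => \sum_(i < len m) bvec (flipt i e)).
Definition partial (m : nat) (y : CF m) : CF m := dtil y + eta y.

Definition proj (k : nat) : CF k.+2 -> CF k.+1 :=
  linext (fun e : basis k.+2 =>
    @bvec k.+1 (behead_tuple (behead_tuple e))).

(* (a, b, y) : prefix (a,b) to every basis tuple of y, extended linearly *)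
Definition prefix (k : nat) (a b : bool) (y : CF k.+1) : CF k.+2 :=
  linext (fun e : basis k.+1 =>
    @bvec k.+2 (cons_tuple a (cons_tuple b e))) y.

Definition decomp (k : nat) (u v w t : CF k.+1) : CF k.+2 :=
  prefix true true u + prefix false false u + prefix false true v
  + prefix true false v + prefix true true w + prefix false true w
  + prefix true true t.

From HB Require Import structures.
From mathcomp Require Import all_boot all_order all_algebra.
Import GRing.Theory.
Local Open Scope ring_scope.

(* Cutting a basis tuple of CF(N) after its first two signs identifies CF(N)
   with four copies of CF(n), the blocks x_ab for a, b in {+1, -1}.  The map pi
   adds up the four blocks, and the (a,b)-block of d_N x is
   x_(-a)b + x_a(-b) + d~_n x_ab + eta_n x_(-a)(-b).  The decomposition is read
   off the blocks (u = x_--, v = x_+-, w = x_-+ + x_+-, t = pi(x)), and over F_2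
   the vanishing of the four blocks of d_N x becomes the three stated
   equations, because the (+,+)-block is the (-,-)-block plus d_n w + d_n t. *)

(* [tnth0] and [tnthS] restated for [cons_tuple], which they match only up to
   conversion. *)
Lemma tnth_cons0 n (a : bool) (s : n.-tuple bool) : tnth (cons_tuple a s) ord0 = a.
Proof. exact: tnth0. Qed.

Lemma tnth_consS n (a : bool) (s : n.-tuple bool) i :
  tnth (cons_tuple a s) (lift ord0 i) = tnth s i.
Proof. exact: tnthS. Qed.

Section TwoSignPrefix.
Variable k : nat.
Implicit Types (a b : bool) (e : basis k.+1).

Definition cons2 a b e : basis k.+2 := cons_tuple a (cons_tuple b e).

Lemma cons2_eq a b a' b' e e' :
  (cons2 a b e == cons2 a' b' e') = [&& a == a', b == b' & e == e'].
Proof. by rewrite -val_eqE /= !eqseq_cons val_eqE. Qed.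

Lemma cons2_behead (e : basis k.+2) :
  cons2 (thead e) (thead (behead_tuple e)) (behead_tuple (behead_tuple e)) = e.
Proof. by apply: val_inj; case: e => [[|a [|b s]] ?]. Qed.

Lemma behead2_cons2 a b e : behead_tuple (behead_tuple (cons2 a b e)) = e.
Proof. exact: val_inj. Qed.

Lemma tnth_cons2 a b e (j : 'I_(len k.+2)) : tnth (cons2 a b e) j =
  if unlift ord0 j is Some j1 then
    (if unlift ord0 j1 is Some j2 then tnth e j2 else b)
  else a.
Proof.
case: (unliftP ord0 j) => [j1|] -> /=; last exact: tnth_cons0.
rewrite tnth_consS; case: (unliftP ord0 j1) => [j2|] -> /=; last exact: tnth_cons0.
exact: tnth_consS.
Qed.

Lemma negt_cons2 a b e : negt (cons2 a b e) = cons2 (~~ a) (~~ b) (negt e).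
Proof.
apply: eq_from_tnth => j; rewrite tnth_mktuple !tnth_cons2.
by case: unlift => [j1|//]; case: unlift => [j2|//]; rewrite tnth_mktuple.
Qed.

Lemma flipt_cons2_0 a b e : flipt (ord0 : 'I_(len k.+2)) (cons2 a b e) = cons2 (~~ a) b e.
Proof.
apply: eq_from_tnth => j; rewrite tnth_mktuple !tnth_cons2.
by case: (unliftP ord0 j) => [j1|] ->; rewrite ?eqxx // (negbTE (neq_lift _ _)).
Qed.

Lemma flipt_cons2_1 a b e :
  flipt (lift ord0 ord0 : 'I_(len k.+2)) (cons2 a b e) = cons2 a (~~ b) e.
Proof.
apply: eq_from_tnth => j; rewrite tnth_mktuple !tnth_cons2.
case: (unliftP ord0 j) => [j1|] -> //=; rewrite (inj_eq lift_inj).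
by case: (unliftP ord0 j1) => [j2|] ->; rewrite ?eqxx // (negbTE (neq_lift _ _)).
Qed.

Lemma flipt_cons2_S a b e (i : 'I_(len k.+1)) :
  flipt (lift ord0 (lift ord0 i) : 'I_(len k.+2)) (cons2 a b e) = cons2 a b (flipt i e).
Proof.
apply: eq_from_tnth => j; rewrite tnth_mktuple !tnth_cons2.
case: (unliftP ord0 j) => [j1|] -> //=; rewrite (inj_eq lift_inj).
by case: (unliftP ord0 j1) => [j2|] -> //=; rewrite (inj_eq lift_inj) tnth_mktuple.
Qed.

End TwoSignPrefix.

Arguments cons2 {k}.

Lemma linext_is_linear m m' (f : basis m -> CF m') : linear (linext f).
Proof.
move=> c y z; rewrite /linext scaler_sumr -big_split /=; apply: eq_bigr => e _.
by rewrite !ffunE scalerDl scalerA.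
Qed.

HB.instance Definition _ m m' (f : basis m -> CF m') :=
  GRing.isLinear.Build _ _ _ *:%R (linext f) (@linext_is_linear m m' f).
HB.instance Definition _ m := GRing.Linear.copy (@eta m) (linext _).
HB.instance Definition _ m := GRing.Linear.copy (@dtil m) (linext _).
HB.instance Definition _ k := GRing.Linear.copy (@proj k) (linext _).

Section LinearExtension.
Variable m : nat.
Implicit Types (y : CF m) (e : basis m).

Lemma bvecE e e' : bvec e e' = if e' == e then 1 else 0.
Proof. by rewrite ffunE; case: eqP. Qed.

Lemma sum_bvec y : \sum_e y e *: bvec e = y.
Proof.
apply/ffunP => e'; rewrite sum_ffunE (bigD1 e') //= big1 => [|e /negbTE ne].
  by rewrite ffunE bvecE eqxx addr0; apply: mulr1.
by rewrite ffunE bvecE eq_sym ne scaler0.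
Qed.

Lemma linext_bvec m' (f : basis m -> CF m') e : linext f (bvec e) = f e.
Proof.
rewrite /linext (bigD1 e) //= big1 => [|e' /negbTE ne].
  by rewrite bvecE eqxx scale1r addr0.
by rewrite bvecE ne scale0r.
Qed.

Lemma linext_sum m' n (f : 'I_n -> basis m -> CF m') y :
  linext (fun e => \sum_i f i e) y = \sum_i linext (f i) y.
Proof. by rewrite /linext exchange_big; apply: eq_bigr => e _; rewrite scaler_sumr. Qed.

Lemma linext_involutive (g : basis m -> basis m) y : involutive g ->
  linext (fun e => bvec (g e)) y = [ffun e => y (g e)].
Proof.
move=> gK; apply/ffunP => e; rewrite sum_ffunE ffunE (reindex_inj (inv_inj gK)) /=.
rewrite (bigD1 e) //= big1 => [|e' ne]; rewrite ffunE bvecE gK.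
  by rewrite eqxx addr0; apply: mulr1.
by rewrite eq_sym (negbTE ne) scaler0.
Qed.

Lemma etaE y : eta y = [ffun e => y (negt e)].
Proof. by apply: linext_involutive => e; apply: eq_from_tnth => j; rewrite !tnth_mktuple negbK. Qed.

Lemma dtilE y : dtil y = \sum_i [ffun e => y (flipt i e)].
Proof.
rewrite /dtil linext_sum; apply: eq_bigr => i _; apply: linext_involutive => e.
by apply: eq_from_tnth => j; rewrite !tnth_mktuple; case: eqP => // ->; rewrite negbK.
Qed.

Lemma CF_addrr y : y + y = 0.
Proof. by apply/ffunP => e; rewrite !ffunE; case: (y e) => [[|[|n]] ?] //; apply/eqP. Qed.

Lemma CF_addr_eq0 y z : (y + z == 0) = (y == z).
Proof. by rewrite addr_eq0 -[- z]add0r -(CF_addrr z) addrK. Qed.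

End LinearExtension.

(* Identities in characteristic 2, checked pointwise over the two values of
   F_2; images under eta and dtil are treated as atoms. *)
Ltac CF_char2 :=
  repeat match goal with |- context [eta ?y] => let z := fresh "z" in move: (eta y) => z end;
  repeat match goal with |- context [dtil ?y] => let z := fresh "z" in move: (dtil y) => z end;
  let e := fresh "e" in
  apply/ffunP => e; rewrite ?ffunE;
  repeat match goal with |- context [fun_of_fin ?y e] => move: (fun_of_fin y e) end;
  by do ! case=> [[|[|?]] ?] //; apply/eqP.

(* Locked, so that unification never unfolds a block into its ffun. *)
HB.lock Definition block {k} a b (x : CF k.+2) : CF k.+1 := [ffun e => x (cons2 a b e)].

Section Blocks.
Variable k : nat.
Implicit Types (a b : bool) (x : CF k.+2) (y u v w t : CF k.+1).

Lemma blockE a b x e : block a b x e = x (cons2 a b e).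
Proof. by rewrite block.unlock ffunE. Qed.

Lemma block_is_linear a b : linear (@block k a b).
Proof. by move=> c x x'; apply/ffunP => e; rewrite !(blockE, ffunE). Qed.

HB.instance Definition _ a b :=
  GRing.isLinear.Build _ _ _ *:%R (@block k a b) (block_is_linear a b).

Lemma block_inj x x' : (forall a b, block a b x = block a b x') -> x = x'.
Proof.
move=> eq_blocks; apply/ffunP => e; rewrite -[e]cons2_behead.
have /ffunP/(_ (behead_tuple (behead_tuple e))) :=
  eq_blocks (thead e) (thead (behead_tuple e)).
by rewrite !blockE.
Qed.

Lemma block_eq0 x : x = 0 <-> forall a b, block a b x = 0.
Proof. by split=> [-> a b|x0]; [exact: raddf0 | apply: block_inj => a b; rewrite x0 raddf0]. Qed.

Lemma block_bvec a b a' b' (e : basis k.+1) :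
  block a b (bvec (cons2 a' b' e)) = if (a == a') && (b == b') then bvec e else 0.
Proof.
apply/ffunP => e'; rewrite blockE bvecE cons2_eq andbA.
by case: ((a == a') && (b == b')); rewrite /= ?bvecE ?ffunE.
Qed.

Lemma block_prefix a b a' b' y :
  block a b (prefix a' b' y) = if (a == a') && (b == b') then y else 0.
Proof.
rewrite /prefix /linext linear_sum.
under eq_bigr => e _ do rewrite linearZ /= (block_bvec a b a' b').
by case: ifP => _; [rewrite sum_bvec | rewrite big1 // => e _; rewrite scaler0].
Qed.

Lemma proj_prefix a b y : proj (prefix a b y) = y.
Proof.
rewrite /prefix /linext linear_sum -[RHS]sum_bvec; apply: eq_bigr => e _.
by rewrite linearZ /= /proj linext_bvec behead2_cons2.
Qed.

Lemma sum_prefix_block x :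
  prefix true true (block true true x) + prefix true false (block true false x)
  + prefix false true (block false true x) + prefix false false (block false false x) = x.
Proof.
apply: block_inj => a b; rewrite !raddfD /=.
(* Abstracting prefix: otherwise rewriting compares distinct prefix terms by
   unfolding them, which takes tens of seconds. *)
have := block_prefix a b; move: (@prefix k) => P block_P.
rewrite !block_P {block_P}.
by case: a; case: b; rewrite /= ?addr0 ?add0r.
Qed.

Lemma proj_blocks x : proj x =
  block true true x + block true false x + block false true x + block false false x.
Proof.
rewrite -{1}(sum_prefix_block x) !raddfD /=.
have := proj_prefix; move: (@prefix k) => P proj_P.
by rewrite !proj_P.
Qed.

Lemma block_eta a b x : block a b (eta x) = eta (block (~~ a) (~~ b) x).
Proof. by rewrite !etaE; apply/ffunP => e; rewrite !(blockE, ffunE) negt_cons2. Qed.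

Lemma block_dtil a b x :
  block a b (dtil x) = block (~~ a) b x + block a (~~ b) x + dtil (block a b x).
Proof.
rewrite !dtilE; apply/ffunP => e; rewrite !(blockE, ffunE) !sum_ffunE.
rewrite big_ord_recl big_ord_recl !ffunE flipt_cons2_0 flipt_cons2_1 addrA.
congr (_ + _); apply: eq_bigr => i _.
by rewrite !ffunE flipt_cons2_S blockE.
Qed.

Lemma block_partial a b x : block a b (partial x) =
  block (~~ a) b x + block a (~~ b) x + dtil (block a b x) + eta (block (~~ a) (~~ b) x).
Proof. by rewrite raddfD /= block_dtil block_eta. Qed.

Lemma block_decomp a b u v w t : block a b (decomp u v w t) =
  if a then (if b then u + w + t else v) else (if b then v + w else u).
Proof.
rewrite /decomp !raddfD /=.
have := block_prefix a b; move: (@prefix k) => P block_P.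
rewrite !block_P {block_P}.
by case: a; case: b; rewrite /= ?addr0 ?add0r.
Qed.

Lemma decomp_blocks x : x =
  decomp (block false false x) (block true false x)
         (block false true x + block true false x) (proj x).
Proof.
apply: block_inj => a b; rewrite block_decomp proj_blocks.
by case: a; case: b => /=; CF_char2.
Qed.

Lemma decomp_inj u v w t u' v' w' t' :
  decomp u v w t = decomp u' v' w' t' -> [/\ u = u', v = v', w = w' & t = t'].
Proof.
have := block_decomp; move: (@decomp k) => dec block_dec eq_dec.
have block_eq a b := congr1 (block a b) eq_dec.
move: (block_eq false false) (block_eq true false) (block_eq false true) (block_eq true true).
by rewrite !block_dec /= => -> -> /addrI -> /addrI ->.
Qed.

Lemma partial_decomp_eq0 u v w t : partial t = 0 ->
  (partial (decomp u v w t) = 0 <->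
   [/\ partial v = w + t + eta w, partial u = w + eta t + eta w & partial w = 0]).
Proof.
move=> t_closed; set D := decomp u v w t.
have pTF : block true false (partial D) = partial v + (w + t + eta w).
  by rewrite block_partial !block_decomp /= !raddfD /partial /=; CF_char2.
have pFF : block false false (partial D) = partial u + (w + eta t + eta w).
  by rewrite block_partial !block_decomp /= !raddfD /partial /=; CF_char2.
have pFT : block false true (partial D) = block true false (partial D) + partial w.
  by rewrite !block_partial !block_decomp /= !raddfD /partial /=; CF_char2.
have pTT : block true true (partial D) = block false false (partial D) + partial w + partial t.
  by rewrite !block_partial !block_decomp /= !raddfD /partial /=; CF_char2.
(* Only these four block equations are used below; abstracting partial and
   eta keeps rewriting from unfolding them. *)
move: (@partial k.+1) (@eta k.+1) pTF pFF pFT pTT t_closed => P E pTF pFF pFT pTT t_closed.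
split=> [/block_eq0 blocks0 | [dv du dw]].
  have := blocks0 true false; rewrite pTF => /eqP; rewrite CF_addr_eq0 => /eqP dv.
  have := blocks0 false false; rewrite pFF => /eqP; rewrite CF_addr_eq0 => /eqP du.
  by have := blocks0 false true; rewrite pFT blocks0 add0r.
apply/block_eq0 => a b.
have TF0 : block true false (partial D) = 0 by rewrite pTF dv CF_addrr.
have FF0 : block false false (partial D) = 0 by rewrite pFF du CF_addrr.
by case: a; case: b; rewrite ?pTT ?pFT ?TF0 ?FF0 ?dw ?t_closed ?addr0.
Qed.

End Blocks.

Theorem lemma4p3 (k : nat) (x : CF k.+2) :
  partial (proj x) = 0 ->
  (exists u v w t : CF k.+1, partial t = 0 /\ x = decomp u v w t) /\
  (forall u v w t u' v' w' t' : CF k.+1,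
      partial t = 0 -> x = decomp u v w t ->
      partial t' = 0 -> x = decomp u' v' w' t' ->
      [/\ u = u', v = v', w = w' & t = t']) /\
  (forall u v w t : CF k.+1,
      partial t = 0 -> x = decomp u v w t ->
      (partial x = 0 <->
        [/\ partial v = w + t + eta w,
            partial u = w + eta t + eta w &
            partial w = 0])).
Proof.
move=> proj_closed; split; [|split].
- by exists (block false false x), (block true false x),
    (block false true x + block true false x), (proj x); split; last exact: decomp_blocks.
- by move=> u v w t u' v' w' t' _ -> _ /decomp_inj.
- by move=> u v w t t_closed ->; exact: partial_decomp_eq0.
Qed.
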